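(* Let $V=\{i_1,\dots,i_m\}$ and let $\bm X$ (standard exponential margins) follow the chain geometric extremal graphical model with edges $\{i_1,i_2\},\dots,\{i_{m-1},i_m\}$, i.e. $g(\bm x)=\sum_{l=1}^{m-1}g_{\{i_l,i_{l+1}\}}(x_{i_l},x_{i_{l+1}})-\sum_{l=2}^{m-1}x_{i_l}$. Then for any $k\in\{1,\dots,m\}$, the marginal gauge $g_{V_{-k}}(\bm x_{V_{-k}})=\min_{x_{i_k}\ge0}g(\bm x)$ of $\bm X_{V_{-k}}$, $V_{-k}=V\setminus\{i_k\}$, is that of the chain geometric extremal graphical model on $V_{-k}$ with edges $E_{-k}=\{\{i_1,i_2\},\dots,\{i_{k-1},i_{k+1}\},\dots,\{i_{m-1},i_m\}\}$: $g_{V_{-k}}(\bm x_{V_{-k}})=\sum_{\{a,b\}\in E_{-k}}g_{\{a,b\}}(x_a,x_b)-\sum x_{i_l}$, where the last sum runs over the interior (non-endpoint) vertices of the chain $V_{-k}$.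
   Context: $g$ is the gauge of $\bm X$: $-\log f(t\bm x_t)/t\to g(\bm x)$ as $t\to\infty$ whenever $\bm x_t\to\bm x\in[0,\infty)^m$, $f$ the Lebesgue density; marginal gauges $g_J(\bm x_J)=\min_{x_s\ge0,\,s\notin J}g(\bm x)$ satisfy $g_J\ge\max_{j\in J}x_j$; in particular $g_{\{a,b\}}$ denotes the bivariate marginal gauge of $(X_a,X_b)$. *)

From HB Require Import structures.
From mathcomp Require Import all_boot all_order all_algebra.
From mathcomp Require Import classical_sets boolp reals.
Set Implicit Arguments. Unset Strict Implicit. Unset Printing Implicit Defensive.
Import Order.TTheory GRing.Theory Num.Theory.
Local Open Scope ring_scope.
Local Open Scope classical_set_scope.

(* Points of [0,oo)^m are functions 'I_m -> R; vertex set V = 'I_m. *)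
Definition nonneg (R : realType) (m : nat) (x : 'I_m -> R) : Prop :=
  forall j, 0 <= x j.

(* Marginal gauge g_J(x_J) = min_{x_s >= 0, s notin J} g(x), (taken as an
   infimum; only the coordinates of y in J matter). *)
Definition margG (R : realType) (m : nat) (g : ('I_m -> R) -> R)
    (J : pred 'I_m) (y : 'I_m -> R) : R :=
  inf [set g z | z in [set z | nonneg z /\ forall j, J j -> z j = y j]].

(* Gauge of the chain geometric extremal graphical model on the chain
   s = [:: v_1; ...; v_n] (ordered vertex list), with edges {v_l, v_(l+1)}:
   sum over edges of the bivariate marginal gauges of g, minus the sum of
   y over the interior vertices v_2, ..., v_(n-1). *)
Definition chain_formula (R : realType) (m : nat) (g : ('I_m -> R) -> R)
    (s : seq 'I_m) (y : 'I_m -> R) : R :=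
  \sum_(p <- zip s (behead s)) margG g (pred2 p.1 p.2) y
  - \sum_(v <- take (size s).-2 (behead s)) y v.

(* Marginalising a chain gauge can be done one coordinate at a time, as an
   iterated infimum.  To drop an endpoint [a] of a chain whose neighbour is [b],
   note that only the edge term g_{a,b} involves x_a, and that the infimum of
   g_{a,b} over x_a is the margin g_{b}(x_b) = x_b, which cancels the -x_b that
   [b] contributed as an interior vertex; peeling endpoints thus gives the
   marginal gauge of every segment of the chain.  To drop an interior vertex c
   between a and b, the terms involving x_c form the chain gauge of the segment
   [a; c; b], i.e. the marginal gauge of (X_a, X_c, X_b), and minimising it over
   x_c yields g_{a,b}. *)

From HB Require Import structures.
From mathcomp Require Import all_boot all_order all_algebra.
From mathcomp Require Import classical_sets boolp reals.
From mathcomp Require Import ring lra zify.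
Import Order.TTheory GRing.Theory Num.Theory.
Local Open Scope ring_scope.
Local Open Scope classical_set_scope.

Lemma inf_addr (R : realType) (T : Type) (P : set T) (h : T -> R) (c : R) :
  P !=set0 -> has_lbound [set h t | t in P] ->
  inf [set h t + c | t in P] = inf [set h t | t in P] + c.
Proof.
move=> [t0 Pt0] [l lb].
apply/eqP; rewrite eq_le; apply/andP; split.
- rewrite -lerBlDr; apply: lb_le_inf; first by exists (h t0); exists t0.
  move=> _ [t Pt <-]; rewrite lerBlDr; apply: ge_inf; last by exists t.
  by exists (l + c) => _ [u Pu <-]; rewrite lerD2r; apply: lb; exists u.
- apply: lb_le_inf; first by exists (h t0 + c); exists t0.
  move=> _ [t Pt <-]; rewrite lerD2r; apply: ge_inf; [by exists l | by exists t].
Qed.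

Lemma notin_cat_of_uniq {T : eqType} (s1 : seq T) (c : T) (s2 : seq T) :
  uniq (s1 ++ c :: s2) -> c \notin s1 ++ s2.
Proof. by rewrite -cat1s uniq_catCA cat1s => /andP[]. Qed.

Lemma eq_eta_with_in {T : eqType} {U : Type} (f : T -> U) (v : U) {a : T} {s : seq T} :
  a \notin s -> {in s, [eta f with a |-> v] =1 f}.
Proof. by move=> a_notin j /=; case: eqP => // ->; rewrite (negbTE a_notin). Qed.

Section MarginalGauge.
Context {R : realType} {m : nat} {g : ('I_m -> R) -> R}.
Implicit Types (J : pred 'I_m) (y : 'I_m -> R).
Hypothesis g_ge0 : forall x, nonneg x -> 0 <= g x.

Lemma eq_margG J1 J2 y : J1 =1 J2 -> margG g J1 y = margG g J2 y.
Proof. by move=> /funext ->. Qed.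

Lemma eq_margG_in J y y' : (forall j, J j -> y j = y' j) ->
  margG g J y = margG g J y'.
Proof.
move=> yy'; rewrite /margG; congr inf; apply/seteqP.
by split=> _ [z [zn zJ] <-]; exists z => //; split=> // j Jj; rewrite zJ ?yy'.
Qed.

Lemma margG_ge0 J y : 0 <= margG g J y.
Proof.
rewrite /margG; set S := [set g z | z in _].
have [[x Sx]|S0] := pselect (S !=set0); last first.
  by rewrite (_ : S = set0) ?inf0 //; apply/seteqP; split=> // x Sx; apply: S0; exists x.
by apply: lb_le_inf; [exists x | move=> _ [z [zn _] <-]; apply: g_ge0].
Qed.

Lemma margG_full J y : (forall j, J j) -> nonneg y -> margG g J y = g y.
Proof.
move=> JT yn; rewrite /margG (_ : [set g z | z in _] = [set g y]) ?inf1 //.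
apply/seteqP; split=> [_ [z [_ zJ] <-] | _ ->]; last by exists y.
by rewrite /= (_ : z = y) //; apply: funext => j; apply: zJ.
Qed.

Lemma margG_tower J J' a y :
  (forall j, J j = (j == a) || J' j) -> ~~ J' a ->
  (forall j, J' j -> 0 <= y j) ->
  margG g J' y = inf [set margG g J [eta y with a |-> t] | t in [set t | 0 <= t]].
Proof.
move=> defJ J'a y_ge0.
have ne_a j : J' j -> j != a by apply: contraTneq => ->.
pose z0 t := fun j => if J j then [eta y with a |-> t] j else 0.
have z0_ge0 t : 0 <= t -> nonneg (z0 t).
  move=> t_ge0 j; rewrite /z0 defJ /=.
  by case: eqP => //= _; case: ifP => // /y_ge0.
have lbS S : lbound [set g z | z in [set z | nonneg z /\ S z]] 0.
  by move=> _ [z [zn _] <-]; apply: g_ge0.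
apply/eqP; rewrite eq_le; apply/andP; split.
- apply: lb_le_inf; first by exists (margG g J [eta y with a |-> 0]); exists 0 => //=.
  move=> _ [t t_ge0 <-]; apply: lb_le_inf.
    exists (g (z0 t)); exists (z0 t) => //; split; first exact: z0_ge0.
    by move=> j Jj; rewrite /z0 Jj.
  move=> _ [z [zn zJ] <-]; apply: ge_inf; first by exists 0; apply: lbS.
  exists z => //; split=> // j J'j.
  by rewrite zJ ?defJ ?J'j ?orbT //= (negbTE (ne_a _ J'j)).
- apply: lb_le_inf.
    exists (g (z0 0)); exists (z0 0) => //; split; first exact: z0_ge0.
    by move=> j J'j; rewrite /z0 defJ J'j orbT /= (negbTE (ne_a _ J'j)).
  move=> _ [z [zn zJ] <-].
  apply: (@le_trans _ _ (margG g J [eta y with a |-> z a])).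
    apply: ge_inf; first by exists 0 => _ [t _ <-]; apply: margG_ge0.
    by exists (z a) => //; apply: zn.
  apply: ge_inf; first by exists 0; apply: lbS.
  exists z => //; split=> // j; rewrite defJ /=.
  by case: eqP => [-> | _ /zJ].
Qed.

Hypothesis margG1 : forall j y, 0 <= y j -> margG g (pred1 j) y = y j.

Lemma inf_margG_edge J a b y :
  (forall j, J j = (j == a) || (j == b)) -> a != b -> 0 <= y b ->
  inf [set margG g J [eta y with a |-> t] | t in [set t | 0 <= t]] = y b.
Proof.
move=> defJ ab y_ge0; rewrite -(margG_tower J (pred1 b)) ?margG1 //.
by move=> j /eqP ->.
Qed.

Lemma margG_remove_leaf J J' a b c y :
  (forall j, J j = (j == a) || J' j) -> ~~ J' a -> J' b ->
  (forall j, J' j -> 0 <= y j) ->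
  (forall t, 0 <= t -> margG g J [eta y with a |-> t]
                       = margG g (pred2 a b) [eta y with a |-> t] + c) ->
  margG g J' y = y b + c.
Proof.
move=> defJ J'a J'b y_ge0 split_c.
rewrite (margG_tower _ _ _ _ defJ J'a y_ge0) (eq_imagel split_c) inf_addr.
- rewrite (inf_margG_edge _ a b) ?y_ge0 //.
  by apply/eqP => ab; move: J'a; rewrite ab J'b.
- by exists 0; rewrite /= lexx.
- by exists 0 => _ [t _ <-]; apply: margG_ge0.
Qed.

End MarginalGauge.

Section ChainFormula.
Context {R : realType} {m : nat} {g : ('I_m -> R) -> R}.
Implicit Types (s t u : seq 'I_m) (y : 'I_m -> R).
Local Notation chain := (chain_formula g).

Lemma chain_formula_pair a b y : chain [:: a; b] y = margG g (pred2 a b) y.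
Proof. by rewrite /chain_formula /= big_seq1 big_nil subr0. Qed.

Lemma chain_formula_cons3 x a b u y :
  chain [:: x, a, b & u] y = margG g (pred2 x a) y + chain [:: a, b & u] y - y a.
Proof. by rewrite /chain_formula /= !big_cons /=; ring. Qed.

Lemma chain_formula_cons x u y : (1 < size u)%N ->
  chain (x :: u) y = margG g (pred2 x (head x u)) y + chain u y - y (head x u).
Proof. by case: u => [|a [|b u]] // _; apply: chain_formula_cons3. Qed.

Lemma chain_formula_rcons x s a y : (0 < size s)%N ->
  chain (rcons (x :: s) a) y
  = chain (x :: s) y + margG g (pred2 (last x s) a) y - y (last x s).
Proof.
elim: s x => [//|b [|c s] IH] x _.
  by rewrite /= chain_formula_cons3 !chain_formula_pair.
by rewrite [rcons _ _]/= chain_formula_cons3 -!rcons_cons IH // chain_formula_cons3 /=; ring.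
Qed.

Lemma chain_formula_insert s a c b u y :
  chain (s ++ [:: a, c, b & u]) y + margG g (pred2 a b) y
  = chain (s ++ [:: a, b & u]) y + chain [:: a; c; b] y.
Proof.
elim: s => [|x s IH].
  case: u => [|d u]; rewrite /= !chain_formula_cons3 ?chain_formula_pair //; ring.
have hd : head x (s ++ [:: a, c, b & u]) = head x (s ++ [:: a, b & u]) by case: s {IH}.
rewrite !cat_cons !(chain_formula_cons x (_ ++ _)) ?size_cat ?addnS // hd; lra.
Qed.

Lemma eq_chain_formula_in s y y' : {in s, y =1 y'} -> chain s y = chain s y'.
Proof.
have eq_edge t x a : x \in t -> a \in t -> {in t, y =1 y'} ->
    margG g (pred2 x a) y = margG g (pred2 x a) y'.
  by move=> xt ta yy'; apply: eq_margG_in => j /orP[] /eqP ->; apply: yy'.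
elim: s => [|x [|a [|b u]] IH] yy'.
- by rewrite /chain_formula !big_nil.
- by rewrite /chain_formula !big_nil.
- by rewrite !chain_formula_pair (eq_edge [:: x; a]) // !inE eqxx ?orbT.
rewrite !chain_formula_cons3 IH => [|j js]; last by apply: yy'; rewrite inE js orbT.
by rewrite (eq_edge _ x a _ _ yy') ?yy' // !inE eqxx ?orbT.
Qed.

End ChainFormula.

Section ChainModel.
Context {R : realType} {m : nat} {g : ('I_m -> R) -> R} {s0 : seq 'I_m}.
Implicit Types (s t : seq 'I_m) (y : 'I_m -> R).
Local Notation chain := (chain_formula g).
Hypothesis g_ge0 : forall x, nonneg x -> 0 <= g x.
Hypothesis margG1 : forall j y, 0 <= y j -> margG g (pred1 j) y = y j.
Hypothesis s0_uniq : uniq s0.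
Hypothesis mem_s0 : forall j, j \in s0.
Hypothesis g_chain : forall x, nonneg x -> g x = chain s0 x.

Lemma margG_chain_suffix s1 s y : s0 = s1 ++ s -> (1 < size s)%N ->
  {in s, forall j, 0 <= y j} -> margG g [pred j in s] y = chain s y.
Proof.
elim/last_ind: s1 s y => [|s1 a IH] s y def_s0 size_s y_ge0.
  rewrite cat0s in def_s0; rewrite -def_s0 in y_ge0 *.
  by rewrite margG_full -?g_chain // => j; apply: y_ge0.
have {}def_s0 : s0 = s1 ++ a :: s by rewrite def_s0 cat_rcons.
have /andP[a_notin _] : uniq (a :: s).
  by move: s0_uniq; rewrite def_s0 cat_uniq => /and3P[].
case: s def_s0 size_s y_ge0 a_notin IH => [//|b s] def_s0 size_s y_ge0 a_notin IH.
rewrite (margG_remove_leaf g_ge0 margG1 [pred j in [:: a, b & s]] _ a b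
           (chain (b :: s) y - y b) y) /= ?mem_head //; first by ring.
move=> t t_ge0; rewrite IH //; last first.
  by move=> j; rewrite inE /=; case: eqP => // _; apply: y_ge0.
rewrite chain_formula_cons //= (eq_chain_formula_in _ _ _ (eq_eta_with_in y t a_notin)).
by rewrite /= (negbTE (memPn a_notin b (mem_head _ _))); ring.
Qed.

Lemma margG_chain_infix s1 s s2 y : s0 = s1 ++ s ++ s2 -> (1 < size s)%N ->
  {in s, forall j, 0 <= y j} -> margG g [pred j in s] y = chain s y.
Proof.
elim: s2 s y => [|a s2 IH] s y def_s0 size_s y_ge0.
  by apply: (margG_chain_suffix s1); rewrite // def_s0 cats0.
have {}def_s0 : s0 = s1 ++ rcons s a ++ s2 by rewrite cat_rcons.
have a_notin : a \notin s.
  move: s0_uniq; rewrite def_s0 !cat_uniq rcons_uniq.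
  by case/and3P => _ _ /and3P[/andP[]].
case: s def_s0 size_s y_ge0 a_notin => [//|x s] def_s0 size_s y_ge0 a_notin.
rewrite (margG_remove_leaf g_ge0 margG1 [pred j in rcons (x :: s) a] _ a (last x s)
           (chain (x :: s) y - y (last x s)) y); first by ring.
- by move=> j; rewrite /= -rcons_cons mem_rcons.
- exact: a_notin.
- exact: mem_last.
- exact: y_ge0.
move=> t t_ge0; rewrite IH ?size_rcons //; last first.
  by move=> j; rewrite /= -rcons_cons mem_rcons inE; case: eqP => // _; apply: y_ge0.
rewrite chain_formula_rcons // (eq_chain_formula_in _ _ _ (eq_eta_with_in y t a_notin)).
rewrite (eq_margG _ (pred2 a (last x s)) _ (fun j => orbC _ _)).
by rewrite /= (negbTE (memPn a_notin _ (mem_last _ _))); ring.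
Qed.

Lemma margG_chain_remove_inner s a c b t y : s0 = s ++ [:: a, c, b & t] ->
  (forall j, j != c -> 0 <= y j) ->
  margG g (fun j => j != c) y = chain (s ++ [:: a, b & t]) y.
Proof.
move=> def_s0 y_ge0.
have c_notin : c \notin s ++ [:: a, b & t].
  by have := notin_cat_of_uniq (s ++ [:: a]) c (b :: t); rewrite -!catA -def_s0; apply.
have [ca cb] : c != a /\ c != b.
  by split; apply: contraNneq c_notin => ->; rewrite mem_cat !inE eqxx ?orbT.
pose rest := chain (s ++ [:: a, b & t]) y - margG g (pred2 a b) y.
rewrite (margG_tower g_ge0 predT (fun j => j != c) c y) ?eqxx //; last first.
  by move=> j; rewrite orbN.
rewrite (@eq_imagel _ _ _ _
  (fun v => margG g [pred j in [:: a; c; b]] [eta y with c |-> v] + rest)); last first.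
  move=> v v_ge0.
  have yv_ge0 : nonneg [eta y with c |-> v] by move=> j /=; case: eqP => // /eqP /y_ge0.
  rewrite margG_full // g_chain // def_s0.
  apply: (addIr (margG g (pred2 a b) [eta y with c |-> v])).
  rewrite chain_formula_insert (eq_chain_formula_in _ _ _ (eq_eta_with_in y v c_notin)).
  rewrite -(margG_chain_infix s [:: a; c; b] t) //.
  rewrite (eq_margG_in (pred2 a b) _ y) /rest; first by ring.
  by move=> j /orP[] /eqP -> /=; rewrite eq_sym ?(negbTE ca) ?(negbTE cb).
rewrite inf_addr; last 2 first.
- by exists 0; rewrite /= lexx.
- by exists 0 => _ [v _ <-]; apply: margG_ge0.
rewrite -(margG_tower g_ge0 [pred j in [:: a; c; b]] (pred2 a b) c y) /rest; first by ring.
- by move=> j; rewrite !inE orbCA.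
- exact/norP.
- by move=> j /orP[] /eqP ->; apply: y_ge0; rewrite 1?eq_sym.
Qed.

Lemma margG_chain_remove S1 c S2 y : s0 = S1 ++ c :: S2 ->
  (1 < size S1 + size S2)%N -> (forall j, j != c -> 0 <= y j) ->
  margG g (fun j => j != c) y = chain (S1 ++ S2) y.
Proof.
move=> def_s0 size_S y_ge0.
have c_notin : c \notin S1 ++ S2 by apply: notin_cat_of_uniq; rewrite -def_s0.
have off_c : (fun j => j != c) =1 [pred j in S1 ++ S2].
  move=> j; apply/idP/idP => [jc | jS]; last by apply: contraTneq jS => ->.
  by rewrite /= mem_cat; move: (mem_s0 j); rewrite def_s0 mem_cat in_cons (negbTE jc).
have S_ge0 : {in S1 ++ S2, forall j, 0 <= y j}.
  by move=> j; rewrite -[_ \in _]off_c; apply: y_ge0.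
case/lastP: S1 def_s0 size_S off_c S_ge0 {c_notin} => [|s a];
  [|case: S2 => [|b t]] => def_s0 size_S off_c S_ge0.
- by rewrite (eq_margG _ _ _ off_c); apply: (margG_chain_infix [:: c] _ [::]); rewrite ?cats0.
- rewrite ?cats0 ?addn0 in off_c S_ge0 size_S *; rewrite (eq_margG _ _ _ off_c).
  exact: (margG_chain_infix [::] _ [:: c]).
- rewrite cat_rcons; apply: margG_chain_remove_inner => //.
  by rewrite def_s0 cat_rcons.
Qed.

End ChainModel.

Theorem lemma3 (R : realType) (m : nat) (hm : (3 <= m)%N)
  (g : ('I_m -> R) -> R)
  (i : 'I_m -> 'I_m) (hi : injective i)
  (* gauge lower bound g(x) >= max_j x_j *)
  (gmax : forall x : 'I_m -> R, nonneg x -> forall j, x j <= g x)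
  (* standard exponential margins: univariate marginal gauges g_{j}(x) = x *)
  (hexp : forall (j : 'I_m) (y : 'I_m -> R), 0 <= y j -> margG g (pred1 j) y = y j)
  (* chain geometric extremal graphical model along i_1, ..., i_m *)
  (hchain : forall x : 'I_m -> R, nonneg x ->
     g x = chain_formula g [seq i l | l <- enum 'I_m] x)
  (k : 'I_m) :
  forall y : 'I_m -> R, (forall j, j != i k -> 0 <= y j) ->
    margG g (fun j => j != i k) y
    = chain_formula g [seq i l | l <- enum 'I_m & l != k] y.
Proof.
move=> y y_ge0.
have g_ge0 x : nonneg x -> 0 <= g x by move=> xn; exact: le_trans (xn k) (gmax x xn k).
have s0_uniq : uniq [seq i l | l <- enum 'I_m] by rewrite map_inj_uniq ?enum_uniq.
have mem_s0 j : j \in [seq i l | l <- enum 'I_m] by rewrite -codomE (injF_onto hi).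
have [e1 [e2 def_enum]] : exists e1 e2, enum 'I_m = e1 ++ k :: e2.
  have /splitPr[e1 e2] : k \in enum 'I_m by rewrite mem_enum.
  by exists e1, e2.
have /notin_cat_of_uniq : uniq (e1 ++ k :: e2) by rewrite -def_enum enum_uniq.
rewrite mem_cat negb_or => /andP[k_notin_e1 k_notin_e2].
have filter_notin e : k \notin e -> [seq l <- e | l != k] = e.
  by move=> k_notin; apply/all_filterP/allP => l; apply: contraTneq => ->.
rewrite (margG_chain_remove g_ge0 hexp s0_uniq mem_s0 hchain (map i e1) (i k) (map i e2)).
- by rewrite def_enum filter_cat /= eqxx !filter_notin ?map_cat.
- by rewrite def_enum map_cat.
- by rewrite !size_map; move: (size_enum_ord m); rewrite def_enum size_cat /=; lia.
- exact: y_ge0.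
Qed.
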